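(* On the round sphere $\mathbb{S}^3$, let $\Phi=[\tilde u,1]$ (a Killing spinor with $\nabla_X\Phi=\tfrac12X\cdot\Phi$), let $V$ be a vector field and $\alpha$ a smooth function, and set $\Psi:=V\cdot\Phi+\alpha\Phi$. Then $\Psi$ is a generalized Killing spinor of unit length if and only if (i) $\alpha^2+|V|^2=1$, (ii) $-V\lrcorner\ast\nabla_VV-V(\alpha)\,V+\alpha\nabla_VV+d\alpha=0$, (iii) $\alpha\ast(V\wedge dV)+(2\alpha-\delta V)(1-\alpha^2)+\alpha V(\alpha)=0$.
   Context: $\mathbb{S}^3\subset\mathbb{H}$ is the unit sphere with round metric, $u(g)=(gi,gj,gk)$ the left-invariant orthonormal frame defining the orientation, $\tilde u$ its lift to the spin bundle, and spinors are written $[\tilde u,f]$ with $f:\mathbb{S}^3\to\mathbb{H}$, Clifford multiplication by $gx$ acting as $f\mapsto xf$. With this convention $X\cdot Y\cdot Z\cdot\Psi=-\Psi$ for any positive orthonormal basis $(X,Y,Z)$, and $\ast X\cdot\Psi=X\cdot\Psi$. Every spinor can be uniquely written as $V\cdot\Phi+\alpha\Phi$. Vectors and $1$-forms are identified via the metric; $\ast$ is the Hodge star, $\delta$ the codifferential (so $\delta V=-\mathrm{div}V$), $dV$ the exterior derivative of the $1$-form dual to $V$, $\lrcorner$ the interior product. A generalized Killing spinor is $\Psi$ with $\nabla_X\Psi=A(X)\cdot\Psi$ for all $X$ for some symmetric endomorphism field $A$. *)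

From Stdlib Require Import Reals ClassicalEpsilon.
Open Scope R_scope.

Record quat := mkH { qre : R; qi : R; qj : R; qk : R }.

Definition qadd (p q : quat) : quat :=
  mkH (qre p + qre q) (qi p + qi q) (qj p + qj q) (qk p + qk q).
Definition qscal (c : R) (p : quat) : quat :=
  mkH (c * qre p) (c * qi p) (c * qj p) (c * qk p).
Definition qmul (p q : quat) : quat :=
  mkH (qre p * qre q - qi p * qi q - qj p * qj q - qk p * qk q)
      (qre p * qi q + qi p * qre q + qj p * qk q - qk p * qj q)
      (qre p * qj q - qi p * qk q + qj p * qre q + qk p * qi q)
      (qre p * qk q + qi p * qj q - qj p * qi q + qk p * qre q).
Definition qone : quat := mkH 1 0 0 0.
Definition qnorm2 (p : quat) : R :=
  qre p * qre p + qi p * qi p + qj p * qj p + qk p * qk p.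

Definition onS3 (g : quat) : Prop := qnorm2 g = 1.

(** Indices of the left-invariant frame u(g) = (g i, g j, g k). *)
Inductive dir := d1 | d2 | d3.

Definition unitq (a : dir) : quat :=
  match a with d1 => mkH 0 1 0 0 | d2 => mkH 0 0 1 0 | d3 => mkH 0 0 0 1 end.

(** Vectors in frame components: x : dir -> R stands for the tangent vector
    g * (x1 i + x2 j + x3 k) at g; imq x = x1 i + x2 j + x3 k. *)
Definition imq (x : dir -> R) : quat := mkH 0 (x d1) (x d2) (x d3).
Definition sum3 (f : dir -> R) : R := f d1 + f d2 + f d3.
Definition basis (a : dir) : dir -> R :=
  fun b => match a, b with d1,d1 | d2,d2 | d3,d3 => 1 | _,_ => 0 end.
Definition dot (x y : dir -> R) : R := sum3 (fun a => x a * y a).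
Definition cross (x y : dir -> R) : dir -> R :=
  fun c => match c with
           | d1 => x d2 * y d3 - x d3 * y d2
           | d2 => x d3 * y d1 - x d1 * y d3
           | d3 => x d1 * y d2 - x d2 * y d1 end.

(** Flow of the left-invariant field g |-> g e_a : t |-> g exp(t e_a). *)
Definition expq (a : dir) (t : R) : quat :=
  qadd (qscal (cos t) qone) (qscal (sin t) (unitq a)).

Definition has_dir_deriv (F : quat -> R) (a : dir) (g : quat) (l : R) : Prop :=
  derivable_pt_lim (fun t => F (qmul g (expq a t))) 0 l.

Definition ddir (F : quat -> R) (a : dir) (g : quat) : R :=
  epsilon (inhabits 0) (fun l => has_dir_deriv F a g l).

Definition qdist (p q : quat) : R := sqrt (qnorm2 (qadd p (qscal (-1) q))).
Definition continuous_S3 (F : quat -> R) : Prop :=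
  forall g, onS3 g -> forall eps, 0 < eps -> exists delta, 0 < delta /\
    forall h, onS3 h -> qdist h g < delta -> Rabs (F h - F g) < eps.

(** Smoothness on S^3: continuous, and all derivatives along the (smooth,
    global) frame fields exist and are again smooth. *)
CoInductive smooth_S3 (F : quat -> R) : Prop :=
  smooth_S3_intro :
    continuous_S3 F ->
    (forall a, exists DF : quat -> R,
        (forall g, onS3 g -> has_dir_deriv F a g (DF g)) /\ smooth_S3 DF) ->
    smooth_S3 F.

Definition vder (x : dir -> R) (F : quat -> R) (g : quat) : R :=
  sum3 (fun a => x a * ddir F a g).

(** Vector fields: V g : dir -> R are the frame components at g. *)
Definition vcomp (V : quat -> dir -> R) (b : dir) : quat -> R := fun g => V g b.

(** Levi-Civita connection of the round metric: for left-invariant fields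
    nabla_{e_a} e_b = e_a x e_b, hence nabla_X V = X(V^b) e_b + x x V. *)
Definition covV (V : quat -> dir -> R) (g : quat) (x : dir -> R) : dir -> R :=
  fun b => vder x (vcomp V b) g + cross x (V g) b.

(** Lie bracket of left-invariant fields: [g x, g y] = g (xy - yx) = g (2 x cross y). *)
Definition lie (x y : dir -> R) : dir -> R := fun c => 2 * cross x y c.

(** 2-forms: w = f23 e^2/\e^3 + f31 e^3/\e^1 + f12 e^1/\e^2. *)
Record form2 := F2 { f23 : R; f31 : R; f12 : R }.
Definition eval2 (w : form2) (x y : dir -> R) : R :=
  f23 w * (x d2 * y d3 - x d3 * y d2) + f31 w * (x d3 * y d1 - x d1 * y d3)
  + f12 w * (x d1 * y d2 - x d2 * y d1).
Definition interior_prod (x : dir -> R) (w : form2) : dir -> R :=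
  fun b => eval2 w x (basis b).
Definition hodge1 (x : dir -> R) : form2 := F2 (x d1) (x d2) (x d3).
(** Wedge of a 1-form and a 2-form: coefficient of e^1/\e^2/\e^3;
    the Hodge star of c e^1/\e^2/\e^3 is c. *)
Definition wedge12 (x : dir -> R) (w : form2) : R :=
  x d1 * f23 w + x d2 * f31 w + x d3 * f12 w.

(** Exterior derivative of the 1-form dual to V:
    dV(e_a,e_b) = e_a(V_b) - e_b(V_a) - V([e_a,e_b]). *)
Definition dform_ab (V : quat -> dir -> R) (g : quat) (a b : dir) : R :=
  ddir (vcomp V b) a g - ddir (vcomp V a) b g - dot (V g) (lie (basis a) (basis b)).
Definition dV (V : quat -> dir -> R) (g : quat) : form2 :=
  F2 (dform_ab V g d2 d3) (dform_ab V g d3 d1) (dform_ab V g d1 d2).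

(** Codifferential: delta V = - div V = - sum_a <nabla_{e_a} V, e_a>. *)
Definition codiff (V : quat -> dir -> R) (g : quat) : R :=
  - sum3 (fun a => covV V g (basis a) a).

Definition grad (F : quat -> R) (g : quat) : dir -> R := fun a => ddir F a g.

(** Spinors [u~, f] with f : S^3 -> H.  Clifford multiplication by g x is
    f |-> x f.  Spinor covariant derivative in the trivialisation u~:
    nabla_X [u~, f] = [u~, X(f) + 1/2 x f]
    (spin lift of nabla_{e_a} e_b = e_a x e_b; then Phi=[u~,1] is Killing). *)
Definition ddirH (f : quat -> quat) (a : dir) (g : quat) : quat :=
  mkH (ddir (fun h => qre (f h)) a g) (ddir (fun h => qi (f h)) a g)
      (ddir (fun h => qj (f h)) a g) (ddir (fun h => qk (f h)) a g).
Definition vderH (x : dir -> R) (f : quat -> quat) (g : quat) : quat :=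
  qadd (qscal (x d1) (ddirH f d1 g))
       (qadd (qscal (x d2) (ddirH f d2 g)) (qscal (x d3) (ddirH f d3 g))).
Definition clifford (x : dir -> R) (s : quat) : quat := qmul (imq x) s.
Definition spin_nabla (f : quat -> quat) (g : quat) (x : dir -> R) : quat :=
  qadd (vderH x f g) (qscal (1/2) (clifford x (f g))).

Definition Phi : quat -> quat := fun _ => qone.

Definition matvec (M : dir -> dir -> R) (x : dir -> R) : dir -> R :=
  fun b => sum3 (fun a => M b a * x a).
Definition gen_killing (f : quat -> quat) : Prop :=
  exists A : quat -> dir -> dir -> R,
    forall g, onS3 g ->
      (forall a b, A g a b = A g b a) /\
      (forall x : dir -> R, spin_nabla f g x = clifford (matvec (A g) x) (f g)).

Definition unit_length (f : quat -> quat) : Prop :=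
  forall g, onS3 g -> qnorm2 (f g) = 1.

(* Psi = alpha + V is a quaternion-valued function of unit length, so an endomorphism A with
   nabla_X Psi = A(X).Psi must be A(X) = (nabla_X Psi) conj(Psi); this is a pure vector because
   <e_a(Psi), Psi> = e_a(|Psi|^2)/2 = 0.  Hence Psi is a generalized Killing spinor iff this A
   is symmetric, i.e. iff the axial vector E of its skew part vanishes.  Expanding A in terms
   of V and alpha, condition (ii) becomes E x V = 0 and (iii) becomes E . V = 0, which force
   E = 0 wherever V <> 0.  At the other points, either V vanishes on a neighbourhood, where
   Psi is real and A is a multiple of the identity, or E = 0 by continuity. *)

From Stdlib Require Import Reals Lra Psatz ClassicalEpsilon Classical FunctionalExtensionality.
Open Scope R_scope.

Lemma ddir_unique F a g l : has_dir_deriv F a g l -> ddir F a g = l.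
Proof.
  intro H. unfold ddir. apply (uniqueness_limite (fun t => F (qmul g (expq a t))) 0).
  - exact (epsilon_spec (inhabits 0) (fun l => has_dir_deriv F a g l) (ex_intro _ l H)).
  - exact H.
Qed.

Lemma smooth_S3_continuous F : smooth_S3 F -> continuous_S3 F.
Proof. intros []; assumption. Qed.

Lemma has_dir_deriv_ddir F a g : smooth_S3 F -> onS3 g -> has_dir_deriv F a g (ddir F a g).
Proof.
  intros [_ H] Hg. destruct (H a) as [DF [HD _]].
  rewrite (ddir_unique _ _ _ _ (HD g Hg)). apply HD, Hg.
Qed.

Lemma continuous_S3_ext F G :
  (forall h, onS3 h -> F h = G h) -> continuous_S3 F -> continuous_S3 G.
Proof.
  intros E C g Hg eps He. destruct (C g Hg eps He) as [d [Hd Hc]].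
  exists d; split; auto. intros h Hh Hdh. rewrite <- !E; auto.
Qed.

Lemma ddir_continuous F a : smooth_S3 F -> continuous_S3 (fun h => ddir F a h).
Proof.
  intros [_ H]. destruct (H a) as [DF [HD HS]].
  apply (continuous_S3_ext DF).
  - intros h Hh. symmetry. apply ddir_unique, HD, Hh.
  - apply smooth_S3_continuous, HS.
Qed.

Lemma continuous_S3_const c : continuous_S3 (fun _ => c).
Proof.
  intros g _ eps He. exists 1. split; [lra|].
  intros h _ _. rewrite Rminus_diag, Rabs_R0. exact He.
Qed.

Lemma continuous_S3_plus F G :
  continuous_S3 F -> continuous_S3 G -> continuous_S3 (fun h => F h + G h).
Proof.
  intros CF CG x Hx eps He.
  destruct (CF x Hx (eps/2)) as [d1 [Hd1 H1]]; [lra|].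
  destruct (CG x Hx (eps/2)) as [d2 [Hd2 H2]]; [lra|].
  exists (Rmin d1 d2); split; [apply Rmin_pos; auto|].
  intros h Hh Hd. pose proof (Rmin_l d1 d2); pose proof (Rmin_r d1 d2).
  specialize (H1 h Hh ltac:(lra)); specialize (H2 h Hh ltac:(lra)).
  replace (F h + G h - (F x + G x)) with ((F h - F x) + (G h - G x)) by ring.
  eapply Rle_lt_trans; [apply Rabs_triang|]. lra.
Qed.

Lemma continuous_S3_opp F : continuous_S3 F -> continuous_S3 (fun h => - F h).
Proof.
  intros CF x Hx eps He. destruct (CF x Hx eps He) as [d [Hd H]].
  exists d; split; auto. intros h Hh Hdh.
  replace (- F h - - F x) with (- (F h - F x)) by ring. rewrite Rabs_Ropp; auto.
Qed.

Lemma continuous_S3_minus F G :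
  continuous_S3 F -> continuous_S3 G -> continuous_S3 (fun h => F h - G h).
Proof.
  intros CF CG. apply (continuous_S3_plus F (fun h => - G h)); auto.
  apply continuous_S3_opp, CG.
Qed.

Lemma continuous_S3_mult F G :
  continuous_S3 F -> continuous_S3 G -> continuous_S3 (fun h => F h * G h).
Proof.
  intros CF CG x Hx eps He.
  set (M := Rabs (F x) + Rabs (G x) + 1).
  assert (HM : 0 < M) by (unfold M; pose proof (Rabs_pos (F x)); pose proof (Rabs_pos (G x)); lra).
  set (e := Rmin 1 (eps / (4 * M))).
  assert (He1 : 0 < e) by (apply Rmin_pos; [lra| apply Rdiv_lt_0_compat; lra]).
  assert (E1 : e <= 1) by apply Rmin_l.
  assert (E2 : M * e <= eps / 4).
  { replace (eps / 4) with (M * (eps / (4 * M))) by (field; lra).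
    apply Rmult_le_compat_l; [lra | apply Rmin_r]. }
  destruct (CF x Hx e He1) as [d1 [Hd1 H1]].
  destruct (CG x Hx e He1) as [d2 [Hd2 H2]].
  exists (Rmin d1 d2); split; [apply Rmin_pos; auto|].
  intros h Hh Hd. pose proof (Rmin_l d1 d2); pose proof (Rmin_r d1 d2).
  specialize (H1 h Hh ltac:(lra)); specialize (H2 h Hh ltac:(lra)).
  assert (HFh : Rabs (F h) <= M).
  { replace (F h) with (F x + (F h - F x)) by ring.
    eapply Rle_trans; [apply Rabs_triang|]. unfold M; pose proof (Rabs_pos (G x)); lra. }
  assert (HGx : Rabs (G x) <= M) by (unfold M; pose proof (Rabs_pos (F x)); lra).
  replace (F h * G h - F x * G x) with (F h * (G h - G x) + G x * (F h - F x)) by ring.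
  eapply Rle_lt_trans; [apply Rabs_triang|]. rewrite !Rabs_mult.
  assert (Rabs (F h) * Rabs (G h - G x) <= M * e)
    by (apply Rmult_le_compat; auto using Rabs_pos; lra).
  assert (Rabs (G x) * Rabs (F h - F x) <= M * e)
    by (apply Rmult_le_compat; auto using Rabs_pos; lra).
  lra.
Qed.

Lemma continuous_S3_zero_of_near_zeros F g :
  continuous_S3 F -> onS3 g ->
  (forall delta, 0 < delta -> exists h, onS3 h /\ qdist h g < delta /\ F h = 0) -> F g = 0.
Proof.
  intros CF Hg Hnear. destruct (Req_dec (F g) 0) as [|Hne]; auto. exfalso.
  destruct (CF g Hg (Rabs (F g)) (Rabs_pos_lt _ Hne)) as [d [Hd Hc]].
  destruct (Hnear d Hd) as [h [Hh [Hdh HFh]]].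
  specialize (Hc h Hh Hdh). rewrite HFh, Rminus_0_l, Rabs_Ropp in Hc. lra.
Qed.

Definition qdot (p q : quat) : R :=
  qre p * qre q + qi p * qi q + qj p * qj q + qk p * qk q.

Lemma qnorm2_qmul p q : qnorm2 (qmul p q) = qnorm2 p * qnorm2 q.
Proof. destruct p, q; unfold qnorm2, qmul; simpl; ring. Qed.

Lemma onS3_flow g a t : onS3 g -> onS3 (qmul g (expq a t)).
Proof.
  unfold onS3; intro H; rewrite qnorm2_qmul, H.
  pose proof (sin2_cos2 t) as S. unfold Rsqr in S.
  destruct a; unfold expq, qadd, qscal, qone, unitq, qnorm2; simpl; lra.
Qed.

Lemma flow_0 g a : qmul g (expq a 0) = g.
Proof.
  unfold expq; rewrite cos_0, sin_0.
  destruct g, a; unfold qadd, qscal, qone, unitq, qmul; simpl; f_equal; ring.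
Qed.

Lemma qdist_refl g : qdist g g = 0.
Proof.
  unfold qdist. replace (qnorm2 (qadd g (qscal (-1) g))) with 0 by
    (destruct g; unfold qnorm2, qadd, qscal; simpl; ring).
  apply sqrt_0.
Qed.

(* |g exp(t e_a) - g|^2 = 2 (1 - cos t) on S^3. *)
Lemma qdist_flow_small g a delta : onS3 g -> 0 < delta ->
  exists d, 0 < d /\ forall t, Rabs t < d -> qdist (qmul g (expq a t)) g < delta.
Proof.
  intros Hg Hd. pose proof (continuity_cos 0) as C.
  unfold continuity_pt, continue_in, limit1_in, limit_in in C.
  destruct (C (delta * delta / 2)) as [d [Hd0 Hc]]; [nra|].
  exists d; split; auto. intros t Ht.
  assert (Hcos : Rabs (cos t - 1) < delta * delta / 2).
  { destruct (Req_dec t 0) as [->|Hn].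
    - rewrite cos_0, Rminus_diag, Rabs_R0. nra.
    - rewrite <- cos_0. apply (Hc t). split.
      + split; [exact I | auto].
      + simpl. unfold R_dist. rewrite Rminus_0_r. exact Ht. }
  assert (Q : qnorm2 (qadd (qmul g (expq a t)) (qscal (-1) g))
              = qnorm2 g * ((cos t - 1) ^ 2 + sin t ^ 2)).
  { destruct a, g; unfold qnorm2, qadd, qmul, qscal, expq, qone, unitq; simpl; ring. }
  unfold onS3 in Hg. rewrite Hg in Q.
  pose proof (sin2_cos2 t) as S. unfold Rsqr in S.
  apply Rabs_def2 in Hcos.
  unfold qdist. rewrite Q, <- (sqrt_square delta) by lra.
  apply sqrt_lt_1_alt. split; nra.
Qed.

Lemma ddir_locally_zero F a g delta : smooth_S3 F -> onS3 g -> 0 < delta ->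
  (forall h, onS3 h -> qdist h g < delta -> F h = 0) -> ddir F a g = 0.
Proof.
  intros HF Hg Hd Hz.
  pose proof (has_dir_deriv_ddir F a g HF Hg) as D. set (l := ddir F a g) in *.
  destruct (Req_dec l 0) as [|Hl]; auto. exfalso.
  destruct (qdist_flow_small g a delta Hg Hd) as [d2 [Hd2 Hc]].
  destruct (D (Rabs l) (Rabs_pos_lt l Hl)) as [d1 Hd1].
  pose proof (cond_pos d1) as Hp.
  set (t := Rmin d1 d2 / 2).
  assert (Ht0 : 0 < t) by (unfold t; pose proof (Rmin_pos _ _ Hp Hd2); lra).
  assert (Ht1 : t < d1) by (unfold t; pose proof (Rmin_l d1 d2); lra).
  assert (Ht2 : t < d2) by (unfold t; pose proof (Rmin_r d1 d2); lra).
  specialize (Hd1 t ltac:(lra) ltac:(rewrite Rabs_pos_eq; lra)).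
  rewrite Rplus_0_l, flow_0 in Hd1.
  rewrite (Hz g Hg) in Hd1 by (rewrite qdist_refl; lra).
  rewrite (Hz _ (onS3_flow g a t Hg)) in Hd1 by (apply Hc; rewrite Rabs_pos_eq; lra).
  replace ((0 - 0) / t - l) with (- l) in Hd1 by (field; lra).
  rewrite Rabs_Ropp in Hd1. lra.
Qed.

Definition smooth_spinor (f : quat -> quat) : Prop :=
  smooth_S3 (fun h => qre (f h)) /\ smooth_S3 (fun h => qi (f h)) /\
  smooth_S3 (fun h => qj (f h)) /\ smooth_S3 (fun h => qk (f h)).

Lemma qdot_ddirH_unit_length f a g :
  smooth_spinor f -> unit_length f -> onS3 g -> qdot (ddirH f a g) (f g) = 0.
Proof.
  intros [H0 [H1 [H2 H3]]] Hf Hg.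
  pose proof (has_dir_deriv_ddir _ a g H0 Hg) as D0.
  pose proof (has_dir_deriv_ddir _ a g H1 Hg) as D1.
  pose proof (has_dir_deriv_ddir _ a g H2 Hg) as D2.
  pose proof (has_dir_deriv_ddir _ a g H3 Hg) as D3.
  unfold has_dir_deriv in *.
  pose proof (derivable_pt_lim_plus _ _ _ _ _
    (derivable_pt_lim_plus _ _ _ _ _
      (derivable_pt_lim_plus _ _ _ _ _
         (derivable_pt_lim_mult _ _ _ _ _ D0 D0) (derivable_pt_lim_mult _ _ _ _ _ D1 D1))
      (derivable_pt_lim_mult _ _ _ _ _ D2 D2))
    (derivable_pt_lim_mult _ _ _ _ _ D3 D3)) as D.
  apply (derivable_pt_lim_ext _ (fct_cte 1)) in D.
  - apply (uniqueness_limite _ _ _ _ (derivable_pt_lim_const 1 0)) in D.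
    rewrite flow_0 in D. unfold qdot, ddirH; simpl. lra.
  - intro t. unfold plus_fct, mult_fct, fct_cte.
    rewrite <- (Hf _ (onS3_flow g a t Hg)). unfold qnorm2. ring.
Qed.

Definition qconj (p : quat) : quat := mkH (qre p) (- qi p) (- qj p) (- qk p).

Definition qvec (p : quat) : dir -> R :=
  fun c => match c with d1 => qi p | d2 => qj p | d3 => qk p end.

Lemma qmul_qconj_r p q : qmul (qmul p (qconj q)) q = qscal (qnorm2 q) p.
Proof. destruct p, q; unfold qmul, qconj, qscal, qnorm2; simpl; f_equal; ring. Qed.

Lemma qmul_qconj_l p q : qmul (qmul p q) (qconj q) = qscal (qnorm2 q) p.
Proof. destruct p, q; unfold qmul, qconj, qscal, qnorm2; simpl; f_equal; ring. Qed.

Lemma qscal_1 p : qscal 1 p = p.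
Proof. destruct p; unfold qscal; simpl; f_equal; ring. Qed.

Lemma imq_qvec p : qre p = 0 -> imq (qvec p) = p.
Proof. destruct p; simpl; intros ->; reflexivity. Qed.

Lemma clifford_inj (u v : dir -> R) s :
  qnorm2 s = 1 -> clifford u s = clifford v s -> forall c, u c = v c.
Proof.
  intros Hs E c.
  apply (f_equal (fun p => qmul p (qconj s))) in E.
  unfold clifford in E. rewrite !qmul_qconj_l, Hs, !qscal_1 in E.
  destruct c; [apply (f_equal qi) in E | apply (f_equal qj) in E | apply (f_equal qk) in E];
    exact E.
Qed.

Lemma matvec_basis M a c : matvec M (basis a) c = M c a.
Proof. destruct a; unfold matvec, sum3, basis; simpl; ring. Qed.

Lemma spin_nabla_linear f g x :
  spin_nabla f g x =
  qadd (qscal (x d1) (spin_nabla f g (basis d1)))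
    (qadd (qscal (x d2) (spin_nabla f g (basis d2))) (qscal (x d3) (spin_nabla f g (basis d3)))).
Proof.
  unfold spin_nabla, vderH, clifford, basis, qadd, qscal, qmul, imq; simpl; f_equal; ring.
Qed.

Lemma clifford_matvec M x s :
  clifford (matvec M x) s =
  qadd (qscal (x d1) (clifford (fun c => M c d1) s))
    (qadd (qscal (x d2) (clifford (fun c => M c d2) s)) (qscal (x d3) (clifford (fun c => M c d3) s))).
Proof. unfold clifford, matvec, sum3, qadd, qscal, qmul, imq; simpl; f_equal; ring. Qed.

Definition killing_endo (f : quat -> quat) (g : quat) : dir -> dir -> R :=
  fun c a => qvec (qmul (spin_nabla f g (basis a)) (qconj (f g))) c.

Lemma qre_spin_nabla_qconj f g a :
  qre (qmul (spin_nabla f g (basis a)) (qconj (f g))) = qdot (ddirH f a g) (f g).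
Proof.
  destruct a; unfold spin_nabla, vderH, clifford, basis, qdot, qadd, qscal, qmul, qconj, imq;
    simpl; ring.
Qed.

Lemma spin_nabla_killing_endo f g x :
  qnorm2 (f g) = 1 -> (forall a, qdot (ddirH f a g) (f g) = 0) ->
  spin_nabla f g x = clifford (matvec (killing_endo f g) x) (f g).
Proof.
  intros Hn Hd.
  assert (Hcol : forall a,
    spin_nabla f g (basis a) = clifford (fun c => killing_endo f g c a) (f g)).
  { intro a. unfold clifford, killing_endo.
    rewrite imq_qvec by (rewrite qre_spin_nabla_qconj; apply Hd).
    rewrite qmul_qconj_r, Hn, qscal_1. reflexivity. }
  rewrite spin_nabla_linear, clifford_matvec, !Hcol. reflexivity.
Qed.

Definition symmetric (M : dir -> dir -> R) : Prop := forall a b, M a b = M b a.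

Lemma gen_killing_iff_symmetric f : smooth_spinor f -> unit_length f ->
  gen_killing f <-> forall g, onS3 g -> symmetric (killing_endo f g).
Proof.
  intros Hs Hu. split.
  - intros [A HA] g Hg.
    destruct (HA g Hg) as [Hsym Heq].
    assert (HAk : forall a c, A g c a = killing_endo f g c a).
    { intros a c. rewrite <- (matvec_basis (A g) a c), <- (matvec_basis (killing_endo f g) a c).
      apply (clifford_inj _ _ (f g) (Hu g Hg)).
      rewrite <- Heq. apply spin_nabla_killing_endo; [apply Hu, Hg|].
      intro; apply qdot_ddirH_unit_length; assumption. }
    intros a b. rewrite <- !HAk. apply Hsym.
  - intros Hsym. exists (killing_endo f). intros g Hg. split.
    + intros a b. apply Hsym, Hg.
    + intro x. apply spin_nabla_killing_endo; [apply Hu, Hg|].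
      intro; apply qdot_ddirH_unit_length; assumption.
Qed.

Lemma killing_endo_continuous f c a :
  smooth_spinor f -> continuous_S3 (fun h => killing_endo f h c a).
Proof.
  intros (H0 & H1 & H2 & H3).
  destruct c, a; unfold killing_endo, qvec, spin_nabla, vderH, ddirH, clifford, basis,
    qadd, qscal, qmul, qconj, imq; simpl;
  repeat first [ apply continuous_S3_plus | apply continuous_S3_minus
               | apply continuous_S3_mult | apply continuous_S3_opp ];
  first [ apply continuous_S3_const | apply ddir_continuous; assumption
        | apply smooth_S3_continuous; assumption ].
Qed.

Lemma killing_endo_real_symmetric f g :
  qi (f g) = 0 -> qj (f g) = 0 -> qk (f g) = 0 ->
  (forall a, qi (ddirH f a g) = 0 /\ qj (ddirH f a g) = 0 /\ qk (ddirH f a g) = 0) ->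
  symmetric (killing_endo f g).
Proof.
  intros Hi Hj Hk Hd a b.
  destruct (Hd d1) as (I1 & J1 & K1), (Hd d2) as (I2 & J2 & K2), (Hd d3) as (I3 & J3 & K3).
  unfold ddirH in *; simpl in *.
  destruct a, b; unfold killing_endo, qvec, spin_nabla, vderH, ddirH, clifford, basis,
    qadd, qscal, qmul, qconj, imq; simpl;
  rewrite ?Hi, ?Hj, ?Hk, ?I1, ?J1, ?K1, ?I2, ?J2, ?K2, ?I3, ?J3, ?K3; ring.
Qed.

Definition skew (M : dir -> dir -> R) : dir -> R :=
  fun c => match c with
           | d1 => M d2 d3 - M d3 d2
           | d2 => M d3 d1 - M d1 d3
           | d3 => M d1 d2 - M d2 d1 end.

Lemma symmetric_iff_skew_0 M : symmetric M <-> forall c, skew M c = 0.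
Proof.
  split.
  - intros H c; destruct c; simpl; rewrite H; ring.
  - intros H a b. pose proof (H d1); pose proof (H d2); pose proof (H d3); simpl in *.
    destruct a, b; lra.
Qed.

Lemma skew_killing_endo_continuous f c :
  smooth_spinor f -> continuous_S3 (fun h => skew (killing_endo f h) c).
Proof.
  intro Hf.
  destruct c; apply continuous_S3_minus; apply killing_endo_continuous, Hf.
Qed.

(* Lagrange's identity v x (e x v) = |v|^2 e - (e.v) v. *)
Lemma eq_0_of_cross_dot_0 (e v : dir -> R) :
  dot v v <> 0 -> (forall c, cross e v c = 0) -> dot e v = 0 -> forall c, e c = 0.
Proof.
  intros Hv Hc Hd c.
  assert (L : e c * dot v v = cross v (cross e v) c + v c * dot e v)
    by (destruct c; unfold cross, dot, sum3; simpl; ring).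
  assert (Hvc : cross v (cross e v) c = 0)
    by (destruct c; unfold cross at 1; rewrite !Hc; ring).
  rewrite Hvc, Hd, Rmult_0_r, Rplus_0_r in L.
  destruct (Rmult_integral _ _ L); [assumption | contradiction].
Qed.

Definition Psi_of (V : quat -> dir -> R) (alpha : quat -> R) : quat -> quat :=
  fun g => qadd (clifford (V g) (Phi g)) (qscal (alpha g) (Phi g)).

Definition condition_ii (V : quat -> dir -> R) (alpha : quat -> R) g b : R :=
  - (interior_prod (V g) (hodge1 (covV V g (V g))) b) - vder (V g) alpha g * V g b
  + alpha g * covV V g (V g) b + grad alpha g b.

Definition condition_iii (V : quat -> dir -> R) (alpha : quat -> R) g : R :=
  alpha g * wedge12 (V g) (dV V g) + (2 * alpha g - codiff V g) * (1 - alpha g ^ 2)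
  + alpha g * vder (V g) alpha g.

Section Psi.

Variables (V : quat -> dir -> R) (alpha : quat -> R).

Local Notation Psi := (Psi_of V alpha).

Hypothesis smooth_V : forall b, smooth_S3 (vcomp V b).
Hypothesis smooth_alpha : smooth_S3 alpha.

Lemma Psi_eq g : Psi g = mkH (alpha g) (V g d1) (V g d2) (V g d3).
Proof. unfold Psi_of, clifford, Phi, qadd, qscal, qmul, imq, qone; simpl; f_equal; ring. Qed.

Lemma qnorm2_Psi g : qnorm2 (Psi g) = alpha g ^ 2 + dot (V g) (V g).
Proof. rewrite Psi_eq; unfold qnorm2, dot, sum3; simpl; ring. Qed.

Lemma Psi_components :
  (fun h => qre (Psi h)) = alpha /\ (fun h => qi (Psi h)) = vcomp V d1 /\
  (fun h => qj (Psi h)) = vcomp V d2 /\ (fun h => qk (Psi h)) = vcomp V d3.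
Proof.
  repeat split; apply functional_extensionality; intro h; rewrite Psi_eq; reflexivity.
Qed.

Lemma ddirH_Psi a g :
  ddirH Psi a g = mkH (ddir alpha a g) (ddir (vcomp V d1) a g)
                      (ddir (vcomp V d2) a g) (ddir (vcomp V d3) a g).
Proof. unfold ddirH. destruct Psi_components as (-> & -> & -> & ->). reflexivity. Qed.

Lemma smooth_spinor_Psi : smooth_spinor Psi.
Proof.
  unfold smooth_spinor.
  destruct Psi_components as (-> & -> & -> & ->). auto.
Qed.

(* Both identities hold with the defects |Psi|^2 - 1 and <e_b(Psi), Psi> kept as
   error terms; these vanish for a unit spinor. *)
Lemma condition_ii_skew g b :
  qnorm2 (Psi g) = 1 -> qdot (ddirH Psi b g) (Psi g) = 0 ->
  condition_ii V alpha g b = - cross (skew (killing_endo Psi g)) (V g) b.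
Proof.
  intros Hn Hd.
  transitivity (- cross (skew (killing_endo Psi g)) (V g) b
                - ddir alpha b g * (qnorm2 (Psi g) - 1) + alpha g * qdot (ddirH Psi b g) (Psi g));
    [| rewrite Hn, Hd; ring].
  unfold killing_endo, spin_nabla, vderH. rewrite !ddirH_Psi, !Psi_eq.
  destruct b; unfold condition_ii, skew, qvec, interior_prod, hodge1, eval2, covV, vder, grad,
    cross, dot, sum3, basis, vcomp, clifford, qadd, qscal, qmul, qconj, imq, qnorm2, qdot;
    simpl; ring.
Qed.

Lemma condition_iii_skew g :
  qnorm2 (Psi g) = 1 -> (forall k, qdot (ddirH Psi k g) (Psi g) = 0) ->
  condition_iii V alpha g = - dot (skew (killing_endo Psi g)) (V g).
Proof.
  intros Hn Hd.
  transitivity (- dot (skew (killing_endo Psi g)) (V g)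
    - (2 * alpha g + sum3 (fun k => ddir (vcomp V k) k g)) * (qnorm2 (Psi g) - 1)
    + sum3 (fun k => V g k * qdot (ddirH Psi k g) (Psi g)));
    [| unfold sum3; rewrite Hn, !Hd; ring].
  unfold killing_endo, spin_nabla, vderH, sum3. rewrite !ddirH_Psi, !Psi_eq.
  unfold condition_iii, skew, qvec, wedge12, dV, dform_ab, lie, codiff, covV, vder,
    cross, dot, sum3, basis, vcomp, clifford, qadd, qscal, qmul, qconj, imq, qnorm2, qdot;
    simpl; ring.
Qed.

Lemma conditions_of_skew_0 g : unit_length Psi -> onS3 g ->
  (forall c, skew (killing_endo Psi g) c = 0) ->
  (forall b, condition_ii V alpha g b = 0) /\ condition_iii V alpha g = 0.
Proof.
  intros Hu Hg Hskew.
  assert (Hd : forall k, qdot (ddirH Psi k g) (Psi g) = 0)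
    by (intro; apply qdot_ddirH_unit_length; auto using smooth_spinor_Psi).
  split.
  - intro b. rewrite condition_ii_skew by auto.
    destruct b; unfold cross; rewrite !Hskew; ring.
  - rewrite condition_iii_skew by auto.
    unfold dot, sum3; rewrite !Hskew; ring.
Qed.

Lemma skew_0_of_conditions g : unit_length Psi -> onS3 g -> dot (V g) (V g) <> 0 ->
  (forall b, condition_ii V alpha g b = 0) -> condition_iii V alpha g = 0 ->
  forall c, skew (killing_endo Psi g) c = 0.
Proof.
  intros Hu Hg HV Hii Hiii.
  assert (Hd : forall k, qdot (ddirH Psi k g) (Psi g) = 0)
    by (intro; apply qdot_ddirH_unit_length; auto using smooth_spinor_Psi).
  apply eq_0_of_cross_dot_0 with (v := V g); [exact HV | |].
  - intro b. rewrite <- (Ropp_involutive (cross _ _ b)), <- condition_ii_skew, Hii by auto.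
    apply Ropp_0.
  - rewrite <- (Ropp_involutive (dot _ _)), <- condition_iii_skew, Hiii by auto.
    apply Ropp_0.
Qed.

Lemma skew_0_everywhere g : unit_length Psi -> onS3 g ->
  (forall h, onS3 h -> (forall b, condition_ii V alpha h b = 0) /\ condition_iii V alpha h = 0) ->
  forall c, skew (killing_endo Psi g) c = 0.
Proof.
  intros Hu Hg Hcond.
  destruct (classic (exists delta, 0 < delta /\
              forall h, onS3 h -> qdist h g < delta -> forall b, V h b = 0))
    as [[delta [Hdelta HV0]] | Hnear].
  - apply symmetric_iff_skew_0.
    assert (HVg : forall b, V g b = 0) by (apply HV0; [exact Hg | rewrite qdist_refl; lra]).
    assert (HdV : forall a b, ddir (vcomp V b) a g = 0)
      by (intros a b; apply (ddir_locally_zero _ a g delta); auto; intros; apply HV0; auto).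
    apply killing_endo_real_symmetric; try (rewrite Psi_eq; apply HVg).
    intro a. rewrite ddirH_Psi; simpl. auto.
  - intro c. apply (continuous_S3_zero_of_near_zeros (fun h => skew (killing_endo Psi h) c));
      [| exact Hg |].
    + apply skew_killing_endo_continuous, smooth_spinor_Psi.
    + intros delta Hdelta.
      apply NNPP; intro Hnot; apply Hnear; exists delta; split; [exact Hdelta|].
      intros h Hh Hdh. apply NNPP; intro HVh.
      assert (Hdot : dot (V h) (V h) <> 0).
      { intro Hz; apply HVh; intro b; unfold dot, sum3 in Hz; destruct b; nra. }
      apply Hnot; exists h; repeat split; auto.
      destruct (Hcond h Hh) as [Hii Hiii].
      apply skew_0_of_conditions; auto.
Qed.

End Psi.

Theorem proposition5p1 (V : quat -> dir -> R) (alpha : quat -> R) :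
  (forall b, smooth_S3 (vcomp V b)) -> smooth_S3 alpha ->
  let Psi := fun g => qadd (clifford (V g) (Phi g)) (qscal (alpha g) (Phi g)) in
  (gen_killing Psi /\ unit_length Psi) <->
  (forall g, onS3 g ->
     (* (i) *)
     alpha g ^ 2 + dot (V g) (V g) = 1 /\
     (* (ii) *)
     (forall b : dir,
        - (interior_prod (V g) (hodge1 (covV V g (V g))) b)
        - vder (V g) alpha g * V g b
        + alpha g * covV V g (V g) b
        + grad alpha g b = 0) /\
     (* (iii) *)
     alpha g * wedge12 (V g) (dV V g)
     + (2 * alpha g - codiff V g) * (1 - alpha g ^ 2)
     + alpha g * vder (V g) alpha g = 0).
Proof.
  intros HV Ha Psi.
  change Psi with (Psi_of V alpha).
  pose proof (smooth_spinor_Psi V alpha HV Ha) as Hs.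
  assert (Hunit : unit_length (Psi_of V alpha) <->
                  forall g, onS3 g -> alpha g ^ 2 + dot (V g) (V g) = 1).
  { unfold unit_length. setoid_rewrite qnorm2_Psi. reflexivity. }
  split.
  - intros [Hgk Hu] g Hg.
    pose proof (proj1 (gen_killing_iff_symmetric _ Hs Hu) Hgk) as Hsym.
    split; [apply Hunit; assumption|].
    apply (conditions_of_skew_0 V alpha HV Ha g Hu Hg), symmetric_iff_skew_0, Hsym, Hg.
  - intros Hcond.
    assert (Hu : unit_length (Psi_of V alpha)) by (apply Hunit; intros g Hg; apply Hcond, Hg).
    split; [| exact Hu].
    apply (gen_killing_iff_symmetric _ Hs Hu). intros g Hg.
    apply symmetric_iff_skew_0, (skew_0_everywhere V alpha HV Ha g Hu Hg).
    intros h Hh. apply Hcond, Hh.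
Qed.
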